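(* Let $d\ge2$ be an integer and $N_1,\dots,N_d$ positive integers. Let $X\subseteq[N_1]\times\cdots\times[N_d]$, and let $\mathbf{b}=(b_1,\dots,b_d)\in\mathbb{Z}^d\setminus\{\mathbf{0}\}$ with $\lambda=\lambda(\mathbf{b}):=\max_{1\le i\le d}\frac{|b_i|}{\gcd(b_1,\dots,b_d)N_i}\le1$. Let $s^*\le s\le\min_iN_i$ be positive integers. Suppose $f_{\mathbf{b}}:\mathbb{Z}^d\to\mathbb{Z}^{d-1}$ is a map of the form $f_{\mathbf{b}}(\mathbf{x})=M\mathbf{x}+\mathbf{v}$ ($M\in\mathbb{Z}^{(d-1)\times d}$, $\mathbf{v}\in\mathbb{Z}^{d-1}$) such that for all $\mathbf{x}_1,\mathbf{x}_2\in\mathbb{Z}^d$, $f_{\mathbf{b}}(\mathbf{x}_1)=f_{\mathbf{b}}(\mathbf{x}_2)$ iff $\mathbf{x}_1-\mathbf{x}_2=k\mathbf{b}$ for some $k\in\mathbb{Q}$, and let $\mathbf{b}'\in\mathbb{Z}^d$ satisfy $f_{\mathbf{b}}(\mathbf{b}')\ne f_{\mathbf{b}}(\mathbf{0})$. Then \[ |U^d(X,\mathbf{b},s)\cap U^d(X,\mathbf{b}',s)|\le\frac{s^*-1}{s}|U^d(X,\mathbf{b}',s)|+\frac2\lambda\big|U^{d-1}\big(f_{\mathbf{b}}(U^d(X,\mathbf{b},s)),\,f_{\mathbf{b}}(\mathbf{b}')-f_{\mathbf{b}}(\mathbf{0}),\,s^*\big)\big|. \]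
   Context: $[N]=\{1,\dots,N\}$. For $n\ge1$, a finite set $Y\subseteq\mathbb{Z}^n$, $\mathbf{c}\in\mathbb{Z}^n\setminus\{\mathbf{0}\}$ and a positive integer $r$: points $\mathbf{y},\mathbf{y}'$ are congruent mod $\mathbf{c}$ if $\mathbf{y}-\mathbf{y}'\in\mathbb{Z}\mathbf{c}$, and $U^n(Y,\mathbf{c},r)$ is the set of $\mathbf{y}\in Y$ with $|\{\mathbf{y}'\in Y:\mathbf{y}'\equiv\mathbf{y}\pmod{\mathbf{c}}\}|\ge r$. (If $\mathbf{b}'=\mathbf{0}$ is allowed by the hypothesis it cannot occur, since then $f_{\mathbf{b}}(\mathbf{b}')=f_{\mathbf{b}}(\mathbf{0})$.) *)

From HB Require Import structures.
From mathcomp Require Import all_boot all_order all_algebra.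
From mathcomp Require Import boolp.
From mathcomp Require Import finmap.
Set Implicit Arguments. Unset Strict Implicit. Unset Printing Implicit Defensive.
Import Order.TTheory GRing.Theory Num.Theory.
Local Open Scope ring_scope.
Local Open Scope fset_scope.

Definition congr_mod (n : nat) (c y y' : 'rV[int]_n) : bool :=
  `[< exists k : int, y - y' = k *: c >].

Definition Uset (n : nat) (Y : {fset 'rV[int]_n}) (c : 'rV[int]_n) (r : nat)
  : {fset 'rV[int]_n} :=
  [fset y in Y | (r <= #|` [fset y' in Y | congr_mod c y y'] |)%N].

Definition gcd_vec (n : nat) (b : 'rV[int]_n) : nat :=
  \big[gcdn/0%N]_(i < n) `|b ord0 i|%N.

Definition lambda_b (n : nat) (N : 'I_n -> nat) (b : 'rV[int]_n) : rat :=
  \big[Num.max/0]_(i < n) ((`|b ord0 i|%N)%:R / ((gcd_vec b * N i)%N)%:R).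

From HB Require Import structures.
From mathcomp Require Import all_boot all_order all_algebra.
From mathcomp Require Import boolp finmap zify ring.
Import Order.TTheory GRing.Theory Num.Theory.
Local Open Scope ring_scope.
Set Implicit Arguments. Unset Strict Implicit. Unset Printing Implicit Defensive.

(** Split W = U^d(X,b,s) ∩ U^d(X,b',s) according to whether f_b(y) lies in
    V = U^{d-1}(f_b(U^d(X,b,s)), c, sstar), where c = f_b(b') - f_b(0).
    If it does not, f_b maps the b'-class of y injectively into a c-class of
    size less than sstar, so each b'-class holds at most sstar - 1 such points,
    while each of them has at least s b'-congruent points in U^d(X,b',s);
    double counting gives the first term.  If it does, y lies in a fibre of
    f_b over V; a fibre is a line of direction b, so inside the box it holds
    at most (N_i - 1)/m + 1 <= 2/lambda points, where m = |b_i|/gcd(b) is the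
    step of the lattice points on the line and i is a coordinate realising
    lambda. *)

Local Open Scope fset_scope.

Lemma card_fset_sep_sum (T : choiceType) (A : {fset T}) (P : pred T) :
  #|` [fset x in A | P x]| = (\sum_(x <- A) P x)%N.
Proof.
rewrite card_fset_sum1 -big_fset_condE big_mkcond /=.
by apply: eq_bigr => x _; case: (P x).
Qed.

Lemma card_fset_sepC (T : choiceType) (A : {fset T}) (P : pred T) :
  (#|` [fset x in A | P x]| + #|` [fset x in A | ~~ P x]|)%N = #|` A|.
Proof.
rewrite !card_fset_sep_sum -big_split card_fset_sum1 /=.
by apply: eq_bigr => x _; case: (P x).
Qed.

Lemma double_counting (T1 T2 : choiceType) (A : {fset T1}) (B : {fset T2})
    (R : T1 -> T2 -> bool) (k1 k2 : nat) :
  {in A, forall a, k1 <= #|` [fset b in B | R a b]|}%N ->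
  {in B, forall b, #|` [fset a in A | R a b]| <= k2}%N ->
  (k1 * #|` A| <= k2 * #|` B|)%N.
Proof.
move=> geA leB; rewrite !card_fset_sum1 !big_distrr /=.
apply: (@leq_trans (\sum_(a <- A) \sum_(b <- B) R a b)%N).
  rewrite !big_seq; apply: leq_sum => a aA.
  by rewrite muln1 -card_fset_sep_sum geA.
rewrite exchange_big !big_seq; apply: leq_sum => b bB.
by rewrite muln1 -card_fset_sep_sum leB.
Qed.

Lemma card_le_mul_fibers (T1 T2 : choiceType) (A : {fset T1}) (B : {fset T2})
    (f : T1 -> T2) (k : nat) :
  {in A, forall a, f a \in B} ->
  {in B, forall b, #|` [fset a in A | f a == b]| <= k}%N ->
  (#|` A| <= k * #|` B|)%N.
Proof.
move=> fAB fibers; rewrite -[#|` A|]mul1n; apply: double_counting fibers.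
by move=> a aA; rewrite cardfs_gt0; apply/fset0Pn; exists (f a); rewrite !inE fAB /=.
Qed.

Lemma card_congr_fset_lt (S : {fset nat}) (m L : nat) : (0 < m)%N ->
  {in S, forall x, x < L}%N -> {in S &, forall x y, x = y %[mod m]} ->
  (#|` S| <= (L.-1 %/ m).+1)%N.
Proof.
move=> m_gt0 ltL congr.
have quo_inj : {in S &, injective (divn^~ m)}.
  by move=> x y xS yS /= eq_q; rewrite (divn_eq x m) (divn_eq y m) eq_q (congr x y).
have <- : #|` [fset (x %/ m)%N | x in S]| = #|` S| by apply: card_in_imfset.
rewrite -(size_iota 0 (L.-1 %/ m).+1) -(undup_id (iota_uniq 0 _)) -card_fseq.
apply: fsubset_leq_card; apply/fsubsetP => _ /imfsetP [x xS ->].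
rewrite in_fset mem_iota add0n ltnS /=; apply: leq_div2r.
by rewrite -ltnS (ltn_predK (ltL x xS)) ltL.
Qed.

Lemma leq_mul_div_pred_succ (m L : nat) :
  (0 < m <= L)%N -> (m * (L.-1 %/ m).+1 <= 2 * L)%N.
Proof. by move=> /andP [m_gt0 mL]; have := leq_trunc_div L.-1 m; nia. Qed.

Section Congruence.
Variable n : nat.
Implicit Types (c x y z : 'rV[int]_n) (Y : {fset 'rV[int]_n}).

Lemma congr_modP c x y : reflect (exists k : int, x - y = k *: c) (congr_mod c x y).
Proof. exact: asboolP. Qed.

Lemma congr_mod_sym c x y : congr_mod c x y = congr_mod c y x.
Proof.
by apply/congr_modP/congr_modP => -[k xy]; exists (- k); rewrite scaleNr -xy opprB.
Qed.

Lemma congr_mod_trans c x y z :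
  congr_mod c x y -> congr_mod c y z -> congr_mod c x z.
Proof.
move=> /congr_modP [k xy] /congr_modP [l yz]; apply/congr_modP; exists (k + l)%R.
by rewrite scalerDl -xy -yz addrA subrK.
Qed.

Lemma in_Uset Y c r y :
  (y \in Uset Y c r) = (y \in Y) && (r <= #|` [fset z in Y | congr_mod c y z]|)%N.
Proof. by rewrite inE. Qed.

Lemma congr_class_eq c Y x y : congr_mod c x y ->
  [fset z in Y | congr_mod c x z] = [fset z in Y | congr_mod c y z].
Proof.
move=> xy; apply/fsetP => z; rewrite !inE; case: (z \in Y) => //=.
by apply/idP/idP; apply: congr_mod_trans; rewrite // congr_mod_sym.
Qed.

Lemma Uset_congr_closed c Y r y z :
  y \in Uset Y c r -> z \in Y -> congr_mod c y z -> z \in Uset Y c r.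
Proof. by rewrite !in_Uset => /andP [_ big_class] -> /(congr_class_eq Y) <-. Qed.

Lemma Uset_class_card c Y r y :
  y \in Uset Y c r -> (r <= #|` [fset z in Uset Y c r | congr_mod c y z]|)%N.
Proof.
move=> yU; move: (yU); rewrite in_Uset => /andP [_ /leq_trans]; apply.
apply/fsubset_leq_card/fsubsetP => z; rewrite !inE => /andP [zY yz].
by rewrite yz andbT -in_Uset (Uset_congr_closed yU zY yz).
Qed.

End Congruence.

Section AffineImage.
Variables (m n : nat) (A : 'M[int]_(n, m)) (f : 'rV[int]_n -> 'rV[int]_m).
Hypothesis fB : forall x y, f x - f y = (x - y) *m A.

Lemma congr_mod_affine c x y : congr_mod c x y -> congr_mod (f c - f 0) (f x) (f y).
Proof.
by move=> /congr_modP [k xy]; apply/congr_modP; exists k; rewrite !fB xy subr0 scalemxAl.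
Qed.

Lemma affine_inj_congr_mod c x y :
  f c != f 0 -> congr_mod c x y -> f x = f y -> x = y.
Proof.
move=> fc_neq /congr_modP [k xy] fxy; apply/eqP; rewrite -subr_eq0 xy.
have /eqP : k *: (f c - f 0) = 0 by rewrite fB subr0 scalemxAl -xy -fB fxy subrr.
by rewrite scalemx_eq0 subr_eq0 (negbTE fc_neq) orbF => /eqP ->; rewrite scale0r.
Qed.

End AffineImage.

Section SparseImage.
Variables (n m : nat) (c : 'rV[int]_n) (e : 'rV[int]_m) (f : 'rV[int]_n -> 'rV[int]_m).
Variables (T : {fset 'rV[int]_m}) (r : nat) (A : {fset 'rV[int]_n}).
Hypothesis f_congr : forall x y, congr_mod c x y -> congr_mod e (f x) (f y).
Hypothesis f_inj : forall x y, congr_mod c x y -> f x = f y -> x = y.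
Hypothesis sparse : {in A, forall a, f a \in T `\` Uset T e r}.

Lemma card_congr_class_sparse z : (#|` [fset a in A | congr_mod c a z]| <= r.-1)%N.
Proof.
set S := [fset a in A | congr_mod c a z].
have [->|/fset0Pn [y yS]] := eqVneq S fset0; first by rewrite cardfs0.
have congr_y a : a \in S -> congr_mod c y a.
  move: yS; rewrite !inE => /andP [_ yz] /andP [_ az].
  by apply: congr_mod_trans yz _; rewrite congr_mod_sym.
have /andP [fy_sparse fyT] : (f y \notin Uset T e r) && (f y \in T).
  by rewrite -in_fsetD sparse //; move: yS; rewrite inE => /andP [].
have class_lt : (#|` [fset w in T | congr_mod e (f y) w]| < r)%N.
  by move: fy_sparse; rewrite in_Uset fyT /= -ltnNge.
rewrite -ltnS (ltn_predK class_lt); apply: leq_ltn_trans class_lt.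
have <- : #|` [fset f a | a in S]| = #|` S|.
  apply: card_in_imfset => a a' aS a'S /=; apply: f_inj.
  by apply: (congr_mod_trans (y := y)); [rewrite congr_mod_sym|]; apply: congr_y.
apply/fsubset_leq_card/fsubsetP => _ /imfsetP [a aS ->].
have /andP [aA _] : (a \in A) && congr_mod c a z by move: aS; rewrite inE.
have := sparse aA; rewrite in_fsetD => /andP [_ faT].
by rewrite !inE faT f_congr ?congr_y.
Qed.

Lemma card_sparse_image (X : {fset 'rV[int]_n}) (s : nat) :
  A `<=` Uset X c s -> (s * #|` A| <= r.-1 * #|` Uset X c s|)%N.
Proof.
move=> /fsubsetP sub_AU.
apply: (double_counting (R := congr_mod c)) => [a aA | z _].
  exact/Uset_class_card/sub_AU.
exact: card_congr_class_sparse.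
Qed.

End SparseImage.

Definition rat_multiple (n : nat) (x b : 'rV[int]_n) : Prop :=
  exists k : rat, map_mx intr x = k *: map_mx intr b.

Section RationalLine.
Variables (n : nat) (b : 'rV[int]_n).
Implicit Types (x : 'rV[int]_n).

Lemma gcd_vec_dvd i : (gcd_vec b %| `|b ord0 i|)%N.
Proof. exact: biggcdn_inf. Qed.

Lemma gcd_vec_gt0 i : b ord0 i != 0 -> (0 < gcd_vec b)%N.
Proof.
move=> bi; have := gcd_vec_dvd i; rewrite lt0n.
by apply: contraTneq => ->; rewrite dvd0n absz_eq0.
Qed.

Lemma dvdn_mul_gcd_vec (a c : nat) :
  (forall j, a %| c * `|b ord0 j|)%N -> (a %| c * gcd_vec b)%N.
Proof.
move=> dvd_all; apply: (big_ind (fun g => a %| c * g)%N) => //.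
- by rewrite muln0 dvdn0.
- by move=> g h ag ah; rewrite muln_gcdr dvdn_gcd ag ah.
Qed.

Lemma rat_multiple_cross x i j :
  rat_multiple x b -> x ord0 j * b ord0 i = x ord0 i * b ord0 j.
Proof.
move=> [k xkb]; apply: (@intr_inj rat); rewrite !intrM.
have coord l : (x ord0 l)%:~R = k * (b ord0 l)%:~R :> rat.
  by have := congr1 (fun A : 'M[rat]_(1, n) => A ord0 l) xkb; rewrite !mxE.
by rewrite !coord; ring.
Qed.

Lemma rat_multiple_eq0 x i :
  rat_multiple x b -> b ord0 i != 0 -> x ord0 i = 0 -> x = 0.
Proof.
move=> xb bi xi0; apply/rowP => j; rewrite mxE.
move/eqP: (rat_multiple_cross i j xb); rewrite xi0 mul0r mulf_eq0 (negbTE bi) orbF.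
by move/eqP.
Qed.

Lemma rat_multiple_dvd x i : rat_multiple x b -> b ord0 i != 0 ->
  (`|b ord0 i| %/ gcd_vec b %| `|x ord0 i|)%N.
Proof.
move=> xb bi; have g_gt0 := gcd_vec_gt0 bi.
rewrite -(dvdn_pmul2r g_gt0) divnK ?gcd_vec_dvd //; apply: dvdn_mul_gcd_vec => j.
by rewrite -abszM -(rat_multiple_cross i j xb) abszM dvdn_mull.
Qed.

Lemma card_rat_line_box (F : {fset 'rV[int]_n}) i (L : nat) :
  b ord0 i != 0 ->
  {in F, forall x, 1 <= x ord0 i /\ x ord0 i <= L%:Z} ->
  {in F &, forall x y, rat_multiple (x - y) b} ->
  (#|` F| <= (L.-1 %/ (`|b ord0 i| %/ gcd_vec b)).+1)%N.
Proof.
move=> bi box line; set m := (`|b ord0 i| %/ gcd_vec b)%N.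
pose h x := `|x ord0 i - 1|%N.
have hE x : x \in F -> (h x)%:Z = x ord0 i - 1.
  by move=> /box [x_ge1 _]; rewrite /h gez0_abs // subr_ge0.
have h_inj : {in F &, injective h}.
  move=> x y xF yF /(congr1 Posz); rewrite !hE // => /addIr xy_i.
  apply/eqP; rewrite -subr_eq0; apply/eqP.
  by apply: rat_multiple_eq0 (line x y xF yF) bi _; rewrite !mxE xy_i subrr.
have <- : #|` [fset h x | x in F]| = #|` F| by apply: card_in_imfset.
apply: card_congr_fset_lt
  => [|_ /imfsetP [x xF ->] | _ _ /imfsetP [x xF ->] /imfsetP [y yF ->]].
- by rewrite divn_gt0 ?(gcd_vec_gt0 bi) // dvdn_leq ?absz_gt0 ?gcd_vec_dvd.
- by have [_ xL] := box x xF; have := hE x xF; lia.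
have : ((h x)%:Z == (h y)%:Z %[mod m%:Z])%Z.
  rewrite eqz_mod_dvd !hE // opprB addrA subrK dvdzE /=.
  by have := rat_multiple_dvd (line x y xF yF) bi; rewrite !mxE.
by rewrite !modz_nat => /eqP [].
Qed.

End RationalLine.

Section Lambda.
Variables (n : nat) (N : 'I_n -> nat) (b : 'rV[int]_n).

Let ratio i : rat := (`|b ord0 i|%N)%:R / ((gcd_vec b * N i)%N)%:R.

Lemma lambda_b_ge i : ratio i <= lambda_b N b.
Proof. exact: le_bigmax. Qed.

Lemma lambda_b_attained (j : 'I_n) : exists i, lambda_b N b = ratio i.
Proof.
have ratio_ge0 i : 0 <= ratio i by rewrite divr_ge0.
by have [i _ lam] := eq_bigmax j predT ratio erefl (fun i _ => ratio_ge0 i); exists i.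
Qed.

Lemma card_le_lambda_image (T : choiceType) (A : {fset 'rV[int]_n}) (B : {fset T})
    (f : 'rV[int]_n -> T) :
  (forall i, 0 < N i)%N -> b != 0 -> lambda_b N b <= 1 ->
  (forall x, x \in A -> forall i, 1 <= x ord0 i /\ x ord0 i <= (N i)%:Z) ->
  {in A &, forall x y, f x = f y -> rat_multiple (x - y) b} ->
  {in A, forall x, f x \in B} ->
  #|` A|%:R <= 2 / lambda_b N b * #|` B|%:R :> rat.
Proof.
move=> N_gt0 b_neq0 lam_le1 box fibers fAB.
have /rV0Pn [j bj] := b_neq0.
have lam_gt0 : 0 < lambda_b N b.
  apply: lt_le_trans (lambda_b_ge j).
  by rewrite divr_gt0 // ltr0n ?absz_gt0 // muln_gt0 (gcd_vec_gt0 bj) N_gt0.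
have [i lamE] := lambda_b_attained j.
have bi : b ord0 i != 0.
  by apply: contraTneq lam_gt0 => bi0; rewrite lamE /ratio bi0 mul0r ltxx.
set m := (`|b ord0 i| %/ gcd_vec b)%N.
have lamE' : lambda_b N b = m%:R / (N i)%:R.
  have g_gt0 := gcd_vec_gt0 bi.
  rewrite lamE /ratio -(divnK (gcd_vec_dvd b i)) -/m !natrM.
  by field; rewrite !pnatr_eq0 -!lt0n g_gt0 N_gt0.
have m_le : (0 < m <= N i)%N.
  move: lam_le1; rewrite lamE' ler_pdivrMr ?ltr0n // mul1r ler_nat => ->.
  by rewrite andbT; move: lam_gt0; rewrite lamE' pmulr_lgt0 ?invr_gt0 ?ltr0n.
have card_A : (#|` A| <= ((N i).-1 %/ m).+1 * #|` B|)%N.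
  apply: card_le_mul_fibers fAB _ => t _; apply: card_rat_line_box bi _ _.
  - by move=> x; rewrite inE => /andP [xA _]; apply: box.
  - move=> x y; rewrite !inE => /andP [xA /eqP fx] /andP [yA /eqP fy].
    by apply: fibers; rewrite ?fx ?fy.
have count_le : ((N i).-1 %/ m).+1%:R <= 2 / lambda_b N b.
  rewrite ler_pdivlMr // lamE' mulrA ler_pdivrMr ?ltr0n // -!natrM ler_nat mulnC.
  exact: leq_mul_div_pred_succ.
apply: le_trans (ler_wpM2r (ler0n _ _) count_le).
by rewrite -natrM ler_nat.
Qed.

End Lambda.

Local Close Scope fset_scope.

Theorem lemma4p8 (d : nat) (N : 'I_d -> nat) (X : {fset 'rV[int]_d})
  (b : 'rV[int]_d) (s sstar : nat)
  (M : 'M[int]_(d.-1, d)) (v : 'rV[int]_(d.-1)) (b' : 'rV[int]_d) :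
  (2 <= d)%N ->
  (forall i, 0 < N i)%N ->
  (forall x, x \in X -> forall i : 'I_d,
      (1 <= x ord0 i)%R /\ (x ord0 i <= (N i)%:Z)%R) ->
  b != 0 ->
  lambda_b N b <= 1 ->
  (0 < sstar)%N -> (sstar <= s)%N -> (forall i, s <= N i)%N ->
  let fb := fun x : 'rV[int]_d => x *m M^T + v in
  (forall x1 x2 : 'rV[int]_d,
      fb x1 = fb x2 <->
      exists k : rat, map_mx (intr : int -> rat) (x1 - x2)
                      = k *: map_mx (intr : int -> rat) b) ->
  fb b' != fb 0 ->
  (#|` (Uset X b s `&` Uset X b' s)%fset |)%:R
    <= (sstar.-1)%:R / s%:R * (#|` Uset X b' s |)%:R
       + 2 / lambda_b N b
         * (#|` Uset [fset fb y | y in Uset X b s]%fset (fb b' - fb 0) sstar |)%:R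
       :> rat.
Proof.
move=> _ N_gt0 box b_neq0 lam_le1 sstar_gt0 sstar_le _ fb fb_fibers fb_neq.
have fbB x y : fb x - fb y = (x - y) *m M^T.
  by rewrite /fb opprD addrACA subrr addr0 mulmxBl.
set U := Uset X b s; set U' := Uset X b' s; set FU := [fset fb y | y in U]%fset.
set V := Uset FU (fb b' - fb 0) sstar; set W := (U `&` U')%fset.
have card_sparse : (s * #|` [fset y in W | fb y \notin V]%fset| <= sstar.-1 * #|` U'|)%N.
  apply: (card_sparse_image (T := FU)).
  - exact: congr_mod_affine.
  - by move=> x y; apply: (affine_inj_congr_mod fbB).
  - move=> a /[1!inE] /andP [/[1!inE] /andP [aU _] faV].
    by rewrite in_fsetD faV in_imfset.
  - exact: fsubset_trans (fset_sub _ _) (fsubsetIr _ _).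
have card_dense : #|` [fset y in W | fb y \in V]%fset|%:R
    <= 2 / lambda_b N b * #|` V|%:R.
  apply: (card_le_lambda_image (f := fb)) N_gt0 b_neq0 lam_le1 _ _ _.
  - move=> x /[1!inE] /andP [/[1!inE] /andP [xU _] _].
    by apply: box; move: xU; rewrite in_Uset => /andP [].
  - by move=> x y _ _ /fb_fibers.
  - by move=> x /[1!inE] /andP [].
have s_gt0 : (0 < s)%N := leq_trans sstar_gt0 sstar_le.
rewrite -(card_fset_sepC W (fun y => fb y \in V)) natrD addrC.
apply: lerD card_dense.
by rewrite mulrAC ler_pdivlMr ?ltr0n // -!natrM ler_nat mulnC.
Qed.
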